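(* Let $B$ be a Batanin tree and $A$ a full $(n-1)$-sphere of $T\mathrm{Pos}(B)$ such that $\dim B<n$. Then for every weak $\omega$-category $\mathbb X=(X,\alpha)$ and every morphism of globular sets $f\colon\mathrm{Pos}(B)\to X$, the coherence cell $\mathrm{coh}^{\mathbb X}(B,A,f)$ is invertible.
   Context: Batanin trees are generated inductively: for every finite list $B_1,\dots,B_n$ ($n\ge0$) of Batanin trees there is a tree $[B_1,\dots,B_n]$; $\dim[B_1,\dots,B_n]=\max_i(\dim B_i+1)$ (and $\dim[\,]=0$). The suspension $\Sigma Y$ of a globular set has $0$-cells $v_-,v_+$ and $(\Sigma Y)_{n+1}=Y_n$, every $1$-cell going from $v_-$ to $v_+$. $\mathrm{Pos}([B_1,\dots,B_n])=\Sigma\mathrm{Pos}(B_1)\vee\cdots\vee\Sigma\mathrm{Pos}(B_n)$, the wedge gluing $v_+$ of each summand to $v_-$ of the next (a single point if $n=0$). Boundary trees: $\partial_0B=[\,]$, $\partial_{k+1}[B_1,\dots,B_n]=[\partial_kB_1,\dots,\partial_kB_n]$, with cosource/cotarget inclusions $s^B_k,t^B_k\colon\mathrm{Pos}(\partial_kB)\to\mathrm{Pos}(B)$ ($s^B_0$ picks the leftmost $0$-position, $t^B_0$ the rightmost, $s^B_{k+1}=\bigvee_i\Sigma s^{B_i}_k$, $t^B_{k+1}=\bigvee_i\Sigma t^{B_i}_k$). $T$ is the free weak $\omega$-category monad on globular sets (Batanin–Leinster), in the computad presentation of Dean et al.: for a globular set $Y$, the $n$-cells of $TY$ are generated by $\mathrm{var}\,y$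 ($y\in Y_n$) and $\mathrm{coh}(B,A,f)$ for a tree $B$ with $\dim B\le n$, a full $(n-1)$-sphere $A$ of $T\mathrm{Pos}(B)$ and a globular map $f\colon\mathrm{Pos}(B)\to TY$; the boundary of $\mathrm{coh}(B,A,f)$ is $A$ with $f$ substituted. An $m$-sphere is a pair of parallel $m$-cells (the unique $(-1)$-sphere is full). A cell of $T\mathrm{Pos}(P)$ covers $P$ if every position of $P$ occurs in it or its iterated boundaries. An $m$-sphere $(u,v)$ of $T\mathrm{Pos}(B)$ is full if $u=T(s^B_m)(u')$, $v=T(t^B_m)(v')$ for $m$-cells $u',v'$ of $T\mathrm{Pos}(\partial_mB)$ covering $\partial_mB$. A weak $\omega$-category is a $T$-algebra $(X,\alpha)$, and $\mathrm{coh}^{\mathbb X}(B,A,f)=\alpha(Tf(\mathrm{coh}(B,A,\mathrm{id})))$ where $\mathrm{id}$ sends each position $p$ to $\mathrm{var}\,p$. It has canonical identities $\mathrm{id}$ and binary compositions $\ast_n$. Invertibility is coinductive: the set $W$ of invertible cells is the largest set of positive-dimensional cells such that every $x\colon u\to v$ in $W$, of dimension $n+1$, admits a cell $\bar x\colon v\to u$ and cells $\eta_x\colon x\ast_n\bar x\to\mathrm{id}(u)$, $\varepsilon_x\colon\bar x\ast_n x\to\mathrm{id}(v)$ in $W$. *)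

From mathcomp Require Import all_boot.

Set Implicit Arguments.
Unset Strict Implicit.
Unset Printing Implicit Defensive.

Inductive tree : Type := Node of seq tree.

Definition children (B : tree) : seq tree := let: Node l := B in l.
Definition child (B : tree) (i : nat) : tree := nth (Node [::]) (children B) i.

Fixpoint tdim (B : tree) : nat :=
  let: Node l := B in
  (fix aux (l : seq tree) : nat :=
     match l with [::] => 0 | c :: l' => maxn (tdim c).+1 (aux l') end) l.

(* ---------- Positions ----------
   A k-dimensional position of [B1..Bn] is encoded as a list of length k+1:
   [:: j] (j <= n) is the j-th 0-position (wedge point), and i :: p
   (i < n, p a (k-1)-position of B_(i+1)) is the position p of the i-th
   suspension summand.  posl B enumerates all positions of Pos(B). *)
Fixpoint posl (B : tree) : seq (seq nat) :=
  let: Node l := B in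
  [seq [:: j] | j <- iota 0 (size l).+1] ++
  (fix aux (i : nat) (l : seq tree) : seq (seq nat) :=
     match l with
     | [::] => [::]
     | c :: l' => [seq i :: p | p <- posl c] ++ aux i.+1 l'
     end) 0 l.

(* source / target of a positive-dimensional position (junk on 0-positions) *)
Fixpoint psrc (p : seq nat) : seq nat :=
  match p with
  | [:: i; _] => [:: i]
  | i :: p' => i :: psrc p'
  | [::] => [::]
  end.
Fixpoint ptgt (p : seq nat) : seq nat :=
  match p with
  | [:: i; _] => [:: i.+1]
  | i :: p' => i :: ptgt p'
  | [::] => [::]
  end.

Fixpoint bd (k : nat) (B : tree) : tree :=
  match k with 0 => Node [::] | k'.+1 => Node (map (bd k') (children B)) end.

(* cosource / cotarget inclusions s^B_k, t^B_k : Pos(d_k B) -> Pos(B) *)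
Fixpoint sinc (k : nat) (B : tree) (p : seq nat) : seq nat :=
  match k with
  | 0 => [:: 0]
  | k'.+1 => match p with
             | [:: j] => [:: j]
             | i :: p' => i :: sinc k' (child B i) p'
             | [::] => [::]
             end
  end.
Fixpoint tinc (k : nat) (B : tree) (p : seq nat) : seq nat :=
  match k with
  | 0 => [:: size (children B)]
  | k'.+1 => match p with
             | [:: j] => [:: j]
             | i :: p' => i :: tinc k' (child B i) p'
             | [::] => [::]
             end
  end.

(* ---------- raw terms of the free weak omega-category ----------
   rcoh B A fs : the coherence coh(B, A, f); A = None is the (-1)-sphere,
   A = Some (u, v) a sphere of T Pos(B); fs lists f(p) for p in posl B. *)
Inductive rterm (V : Type) : Type :=
| rvar of V
| rcoh of tree & option (rterm (seq nat) * rterm (seq nat)) & seq (rterm V).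
Arguments rvar {V}.
Arguments rcoh {V}.

Fixpoint bind (V W : Type) (g : V -> rterm W) (t : rterm V) : rterm W :=
  match t with
  | rvar v => g v
  | rcoh B A fs => rcoh B A (map (bind g) fs)
  end.

Definition rmap (V W : Type) (g : V -> W) (t : rterm V) : rterm W :=
  bind (fun v => rvar (g v)) t.

Fixpoint vars (V : Type) (t : rterm V) : seq V :=
  match t with
  | rvar v => [:: v]
  | rcoh _ _ fs => flatten (map (@vars V) fs)
  end.

Definition fat (V : Type) (B : tree) (fs : seq (rterm V)) (p : seq nat) : rterm V :=
  nth (rcoh B None [::]) fs (index p (posl B)).

(* a "context": the variables of a globular set Y, with their dimension
   predicate and raw source/target *)
Record ctx := Ctx {
  cV : Type;
  vdim : cV -> nat -> Prop;
  vsrc : cV -> cV;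
  vtgt : cV -> cV }.

Definition rsrc (C : ctx) (t : rterm (cV C)) : rterm (cV C) :=
  match t with
  | rvar v => rvar (@vsrc C v)
  | rcoh B (Some (u, _)) fs => bind (fat B fs) u
  | rcoh _ None _ => t
  end.
Definition rtgt (C : ctx) (t : rterm (cV C)) : rterm (cV C) :=
  match t with
  | rvar v => rvar (@vtgt C v)
  | rcoh B (Some (_, v)) fs => bind (fat B fs) v
  | rcoh _ None _ => t
  end.

Definition ctxPos (B : tree) : ctx :=
  {| cV := seq nat;
     vdim := fun p k => p \in posl B /\ size p = k.+1;
     vsrc := psrc; vtgt := ptgt |}.

Fixpoint supp (C : ctx) (k : nat) (t : rterm (cV C)) : seq (cV C) :=
  vars t ++ match k with
            | 0 => [::]
            | k'.+1 => supp k' (rsrc t) ++ supp k' (rtgt t)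
            end.

Definition covers (B : tree) (k : nat) (t : rterm (seq nat)) : Prop :=
  forall p, p \in posl B -> p \in (@supp (ctxPos B) k t : seq (seq nat)).

Definition full_sphere_gen (R : forall C : ctx, rterm (cV C) -> nat -> Prop)
    (B : tree) (m : nat) (u v : rterm (seq nat)) : Prop :=
  R (ctxPos B) u m /\ R (ctxPos B) v m /\
  (0 < m -> @rsrc (ctxPos B) u = @rsrc (ctxPos B) v /\
            @rtgt (ctxPos B) u = @rtgt (ctxPos B) v) /\
  exists u' v' : rterm (seq nat),
    R (ctxPos (bd m B)) u' m /\ covers (bd m B) m u' /\
    R (ctxPos (bd m B)) v' m /\ covers (bd m B) m v' /\
    u = rmap (sinc m B) u' /\ v = rmap (tinc m B) v'.

Definition gmap_gen (R : forall C : ctx, rterm (cV C) -> nat -> Prop)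
    (C : ctx) (B : tree) (fs : seq (rterm (cV C))) : Prop :=
  size fs = size (posl B) /\
  forall p, p \in posl B ->
    R C (fat B fs p) (size p).-1 /\
    (1 < size p -> rsrc (fat B fs p) = fat B fs (psrc p) /\
                   rtgt (fat B fs p) = fat B fs (ptgt p)).

(* wt C t n : t is an n-cell of T(Y) *)
Inductive wt : forall C : ctx, rterm (cV C) -> nat -> Prop :=
| wt_var (C : ctx) (v : cV C) (n : nat) : @vdim C v n -> wt (rvar v) n
| wt_coh (C : ctx) (B : tree) A (fs : seq (rterm (cV C))) (n : nat) :
    tdim B <= n ->
    ((n = 0 /\ A = None) \/
     (exists m u v, n = m.+1 /\ A = Some (u, v) /\ full_sphere_gen wt B m u v)) ->
    @gmap_gen wt C B fs ->
    wt (rcoh B A fs) n.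

Definition full_sphere := full_sphere_gen wt.

Record gset := GSet {
  gcell : nat -> Type;
  gsrc : forall n, gcell n.+1 -> gcell n;
  gtgt : forall n, gcell n.+1 -> gcell n;
  gsrc_src : forall n (x : gcell n.+2), gsrc (gsrc x) = gsrc (gtgt x);
  gtgt_tgt : forall n (x : gcell n.+2), gtgt (gsrc x) = gtgt (gtgt x) }.
Arguments gsrc {g n}.
Arguments gtgt {g n}.

Definition gvsrc (X : gset) (v : {n & gcell X n}) : {n & gcell X n} :=
  let: existT k c := v in
  match k return gcell X k -> {n & gcell X n} with
  | 0 => fun c => existT _ 0 c
  | m.+1 => fun c => existT _ m (gsrc c)
  end c.
Definition gvtgt (X : gset) (v : {n & gcell X n}) : {n & gcell X n} :=
  let: existT k c := v in
  match k return gcell X k -> {n & gcell X n} with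
  | 0 => fun c => existT _ 0 c
  | m.+1 => fun c => existT _ m (gtgt c)
  end c.

Definition ctxG (X : gset) : ctx :=
  {| cV := {n & gcell X n};
     vdim := fun v n => projT1 v = n;
     vsrc := @gvsrc X; vtgt := @gvtgt X |}.

(* the variables of TTY: cells of TY *)
Definition ctxT (C : ctx) : ctx :=
  {| cV := {k & rterm (cV C)};
     vdim := fun v n => projT1 v = n /\ wt (projT2 v) (projT1 v);
     vsrc := fun v => existT _ (projT1 v).-1 (rsrc (projT2 v));
     vtgt := fun v => existT _ (projT1 v).-1 (rtgt (projT2 v)) |}.

Record talg (X : gset) := TAlg {
  alpha : forall n, rterm {k & gcell X k} -> gcell X n;
  alpha_src : forall n (t : rterm (cV (ctxG X))), wt t n.+1 ->
    gsrc (alpha n.+1 t) = alpha n (rsrc t);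
  alpha_tgt : forall n (t : rterm (cV (ctxG X))), wt t n.+1 ->
    gtgt (alpha n.+1 t) = alpha n (rtgt t);
  alpha_unit : forall n (x : gcell X n), alpha n (rvar (existT _ n x)) = x;
  alpha_mult : forall n (t : rterm (cV (ctxT (ctxG X)))), wt t n ->
    alpha n (rmap (fun v : {k & rterm {k & gcell X k}} =>
                     existT (gcell X) (projT1 v) (alpha (projT1 v) (projT2 v))) t)
    = alpha n (bind (fun v : {k & rterm {k & gcell X k}} => projT2 v) t) }.

Definition gmapX (X : gset) (B : tree) (f : seq nat -> {k & gcell X k}) : Prop :=
  forall p, p \in posl B ->
    projT1 (f p) = (size p).-1 /\
    (1 < size p -> gvsrc (f p) = f (psrc p) /\ gvtgt (f p) = f (ptgt p)).

Definition cohX (X : gset) (alg : talg X) (B : tree)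
    (A : option (rterm (seq nat) * rterm (seq nat)))
    (f : seq nat -> {k & gcell X k}) (n : nat) : gcell X n :=
  alpha alg n (rmap f (rcoh B A [seq rvar p | p <- posl B])).

(* disk tree D_n and the tree C_n of a binary composite along dimension n *)
Definition Dtree (n : nat) : tree := iter n (fun t => Node [:: t]) (Node [::]).
Definition Ctree (n : nat) : tree :=
  iter n (fun t => Node [:: t]) (Node [:: Node [::]; Node [::]]).

(* canonical identity of an n-cell u : coh(D_n, (d_n, d_n), u) *)
Definition ident (X : gset) (alg : talg X) (n : nat) (u : gcell X n) : gcell X n.+1 :=
  let top := nseq n.+1 0 in
  let f := fun p : seq nat =>
    let k := (size p).-1 in
    if k == n then existT (gcell X) n u
    else if last 0 p == 0 then iter (n - k) (@gvsrc X) (existT _ n u)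
    else gvtgt (iter (n - k).-1 (@gvsrc X) (existT _ n u)) in
  cohX alg (Dtree n)
       (Some (rvar (sinc n (Dtree n) top), rvar (tinc n (Dtree n) top))) f n.+1.

(* canonical binary composite x *_n y of (n+1)-cells (diagrammatic order:
   x : a -> b, y : b -> c gives x *_n y : a -> c) *)
Definition comp (X : gset) (alg : talg X) (n : nat) (x y : gcell X n.+1) :
    gcell X n.+1 :=
  let top := nseq n.+1 0 in
  let f := fun p : seq nat =>
    let k := (size p).-1 in
    if k == n.+1 then existT (gcell X) n.+1 (if nth 0 p n == 0 then x else y)
    else if (k == n) && (last 0 p == 2) then gvtgt (existT (gcell X) n.+1 y)
    else if last 0 p == 0 then iter (n.+1 - k) (@gvsrc X) (existT _ n.+1 x)
    else gvtgt (iter (n - k) (@gvsrc X) (existT _ n.+1 x)) in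
  cohX alg (Ctree n)
       (Some (rvar (sinc n (Ctree n) top), rvar (tinc n (Ctree n) top))) f n.+1.

(* invertible cells (coinductive); a positive-dimensional cell of
   dimension n+1 is x : gcell X n.+1 *)
CoInductive invertible (X : gset) (alg : talg X) : forall n, gcell X n.+1 -> Prop :=
| inv_intro (n : nat) (x xb : gcell X n.+1) (eta eps : gcell X n.+2) :
    gsrc xb = gtgt x -> gtgt xb = gsrc x ->
    gsrc eta = comp alg x xb -> gtgt eta = ident alg (gsrc x) ->
    gsrc eps = comp alg xb x -> gtgt eps = ident alg (gtgt x) ->
    invertible alg eta -> invertible alg eps ->
    invertible alg x.

From Pilot Require Import Defs.
From Stdlib Require List.
From mathcomp Require Import all_boot.

Set Implicit Arguments.
Unset Strict Implicit.
Unset Printing Implicit Defensive.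

(* If dim B <= m, the boundary tree d_m B is B itself and the cosource and
   cotarget inclusions are identities, so a full m-sphere (u, v) is just a
   pair of parallel m-cells of T Pos(B) that both cover B; hence (v, u) is
   full too.  Let x = coh(B, (u, v), id) and x' = coh(B, (v, u), id).
   Substituting x and x' into the coherences that define binary composition
   and identities gives (m+1)-cells x *_m x' and id(u) of T Pos(B).  They are
   parallel, cover B (their common source is u) and dim B <= m + 1, so they
   form a full (m+1)-sphere, whose coherence pushed along f is a cell
   eta : coh(x) *_m coh(x') -> id; the multiplication law of the algebra
   identifies the pushed-forward terms with the composites and identities of
   X.  Symmetrically (v, u) gives epsilon.  Since eta and epsilon are again
   coherences of full spheres of dimension > dim B, coinduction concludes. *)

Lemma eq_In_map T U (f g : T -> U) s :
  (forall x, List.In x s -> f x = g x) -> map f s = map g s.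
Proof.
elim: s => //= x s IH H; rewrite H; last by left.
by rewrite IH // => y Hy; apply: H; right.
Qed.

Lemma rterm_nested_ind V (P : rterm V -> Prop) :
  (forall v, P (rvar v)) ->
  (forall B A fs, (forall t, List.In t fs -> P t) -> P (rcoh B A fs)) ->
  forall t, P t.
Proof.
move=> Hv Hc; fix IH 1; case=> [v|B A fs]; first exact: Hv.
apply: Hc; elim: fs => [|t fs IHfs] s /= Hs; first by case: Hs.
by case: Hs => [<-|Hs]; [exact: IH | exact: IHfs].
Qed.

Lemma eq_bind V W (g h : V -> rterm W) : g =1 h -> bind g =1 bind h.
Proof.
move=> E; elim/rterm_nested_ind => [v|B A fs IH] /=; first exact: E.
by congr rcoh; apply: eq_In_map.
Qed.

Lemma bind_rvar V (t : rterm V) : bind rvar t = t.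
Proof.
elim/rterm_nested_ind: t => //= B A fs IH; congr rcoh.
by rewrite -[RHS]map_id; apply: eq_In_map.
Qed.

Lemma bind_bind U V W (g : V -> rterm W) (h : U -> rterm V) t :
  bind g (bind h t) = bind (fun x => bind g (h x)) t.
Proof.
elim/rterm_nested_ind: t => //= B A fs IH; congr rcoh.
by rewrite -map_comp; apply: eq_In_map.
Qed.

Lemma fat_map_bind V W (g : V -> rterm W) B fs p :
  fat B (map (bind g) fs) p = bind g (fat B fs p).
Proof.
rewrite /fat; case: (ltnP (index p (posl B)) (size fs)) => H.
  by rewrite (nth_map (rcoh B None [::])).
by rewrite !nth_default ?size_map.
Qed.

Lemma fat_map V B (h : seq nat -> rterm V) p :
  p \in posl B -> fat B (map h (posl B)) p = h p.
Proof. by move=> Hp; rewrite /fat (nth_map p) ?index_mem ?nth_index. Qed.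

(** * Trees and their positions *)

Notation leaf := (Node [::]).

Lemma tree_nested_ind (P : tree -> Prop) :
  (forall l, (forall i, i < size l -> P (nth leaf l i)) -> P (Node l)) ->
  forall t, P t.
Proof.
move=> H; fix IH 1; case=> l; apply: H.
(* [done] would close the absurd cases with [IH], which the guard rejects. *)
elim: l => [|c l IHl] [|i] /= Hi;
  [case: (notF Hi) | case: (notF Hi) | exact: IH | exact: IHl].
Qed.

Fixpoint posl_from (i : nat) (l : seq tree) : seq (seq nat) :=
  if l is c :: l' then [seq i :: p | p <- posl c] ++ posl_from i.+1 l' else [::].

Lemma posl_Node l :
  posl (Node l) = [seq [:: j] | j <- iota 0 (size l).+1] ++ posl_from 0 l.
Proof. by congr (_ :: (_ ++ _)); elim: l 0 => //= c l IH i; rewrite IH. Qed.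

Lemma mem_posl_from i l p : p \in posl_from i l ->
  exists j p', [/\ j < size l, p' \in posl (nth leaf l j) & p = (i + j) :: p'].
Proof.
elim: l i => [|c l IH] i //=.
rewrite mem_cat => /orP [/mapP [p' Hp' ->]|/IH [j [p' [Hj Hp' ->]]]].
  by exists 0, p'; rewrite addn0.
by exists j.+1, p'; rewrite addSnnS.
Qed.

Lemma posl_from_mem i l j p : j < size l -> p \in posl (nth leaf l j) ->
  (i + j) :: p \in posl_from i l.
Proof.
elim: l i j => [|c l IH] i [|j] //= Hj Hp; rewrite mem_cat.
  by rewrite addn0 map_f.
by rewrite -addSnnS IH ?orbT.
Qed.

Lemma mem_posl_Node l p : p \in posl (Node l) ->
  (exists j, j <= size l /\ p = [:: j]) \/
  (exists j p', [/\ j < size l, p' \in posl (nth leaf l j) & p = j :: p']).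
Proof.
rewrite posl_Node mem_cat => /orP [/mapP [j Hj ->]|/mem_posl_from H]; last by right.
by left; exists j; rewrite mem_iota add0n ltnS in Hj.
Qed.

Lemma wedge_mem_posl l j : j <= size l -> [:: j] \in posl (Node l).
Proof. by move=> Hj; rewrite posl_Node mem_cat map_f // mem_iota add0n ltnS. Qed.

Lemma cons_mem_posl l j p : j < size l -> p \in posl (nth leaf l j) ->
  j :: p \in posl (Node l).
Proof. by move=> Hj Hp; rewrite posl_Node mem_cat (posl_from_mem 0 Hj Hp) orbT. Qed.

Fixpoint tdim_seq (l : seq tree) : nat :=
  if l is c :: l' then maxn (tdim c).+1 (tdim_seq l') else 0.

Lemma tdim_Node l : tdim (Node l) = tdim_seq l.
Proof. by elim: l => //= c l ->. Qed.

Lemma tdim_nth l i : i < size l -> tdim (nth leaf l i) < tdim (Node l).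
Proof.
rewrite tdim_Node; elim: l i => [|c l IH] [|i] //= Hi; first by rewrite leq_maxl.
exact: leq_trans (IH _ Hi) (leq_maxr _ _).
Qed.

Lemma tdim_eq0 l : tdim (Node l) <= 0 -> l = [::].
Proof. by case: l => // c l; rewrite tdim_Node /= geq_max. Qed.

Lemma size_posl B p : p \in posl B -> 0 < size p <= (tdim B).+1.
Proof.
elim/tree_nested_ind: B p => l IH p /mem_posl_Node [[j [_ ->]]|[j [p' [Hj Hp' ->]]]] //=.
have /andP [_ Hs] := IH _ Hj _ Hp'; rewrite ltnS.
exact: leq_trans Hs (tdim_nth Hj).
Qed.

Lemma uniq_posl B : uniq (posl B).
Proof.
elim/tree_nested_ind: B => l IH; rewrite posl_Node cat_uniq; apply/and3P; split.
- by rewrite map_inj_uniq ?iota_uniq // => a b [].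
- apply/hasPn => q /mem_posl_from [j [p' [_ Hp' ->]]]; apply/mapP => [[k _ []]] _ E.
  by move: (size_posl Hp'); rewrite E.
- elim: l 0 IH => [|c l IHl] i //= H; rewrite cat_uniq; apply/and3P; split.
  + by rewrite map_inj_uniq; [exact: (H 0) | move=> p q []].
  + apply/hasPn => q /mem_posl_from [j [p' [_ _ ->]]]; apply/mapP => [[p _ []]] E.
    by move: (leq_addr j i.+1); rewrite E ltnn.
  + by apply: IHl => j; apply: (H j.+1).
Qed.

Lemma fat_posl V B (fs : seq (rterm V)) :
  size fs = size (posl B) -> map (fat B fs) (posl B) = fs.
Proof.
move=> Hs; apply: (@eq_from_nth _ (rcoh B None [::])); rewrite size_map // => i Hi.
by rewrite (nth_map [::]) // /fat index_uniq ?uniq_posl.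
Qed.

Lemma psrc_cons i p : 1 < size p -> psrc (i :: p) = i :: psrc p.
Proof. by case: p => [|a [|b p]]. Qed.

Lemma ptgt_cons i p : 1 < size p -> ptgt (i :: p) = i :: ptgt p.
Proof. by case: p => [|a [|b p]]. Qed.

Lemma size_psrc_ptgt p : 1 < size p ->
  size (psrc p) = (size p).-1 /\ size (ptgt p) = (size p).-1.
Proof.
elim: p => [|i p IH] //=; case: p IH => [|a [|b p]] //= IH _.
by have [-> ->] := IH isT.
Qed.

Lemma psrc_ptgt_glob p : 2 < size p ->
  psrc (psrc p) = psrc (ptgt p) /\ ptgt (psrc p) = ptgt (ptgt p).
Proof.
elim: p => [|i p IH] // Hs; have Hs' : 1 < size p by [].
case: (ltnP 2 (size p)) => H; last by case: p Hs' H {Hs IH} => [|a [|b [|c p]]].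
have [S1 S2] := size_psrc_ptgt Hs'.
have Hsrc : 1 < size (psrc p) by rewrite S1 -ltnS prednK // ltnW.
have Htgt : 1 < size (ptgt p) by rewrite S2 -ltnS prednK // ltnW.
rewrite psrc_cons // ptgt_cons // !psrc_cons // !ptgt_cons //.
by have [-> ->] := IH H.
Qed.

Lemma mem_psrc_ptgt B p : p \in posl B -> 1 < size p ->
  psrc p \in posl B /\ ptgt p \in posl B.
Proof.
elim/tree_nested_ind: B p => l IH p /mem_posl_Node [[j [_ ->]]|[j [p' [Hj Hp' ->]]]] // _.
case: p' Hp' => [|a [|b p']] Hp'.
- by have := size_posl Hp'.
- by rewrite !wedge_mem_posl // ltnW.
- have [H1 H2] := IH _ Hj _ Hp' isT.
  have Hs : 1 < size [:: a, b & p'] by [].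
  by rewrite (psrc_cons j Hs) (ptgt_cons j Hs); split; apply: cons_mem_posl.
Qed.

Lemma bd_small B k : tdim B <= k -> bd k B = B.
Proof.
elim/tree_nested_ind: B k => l IH [|k] Hd; first by rewrite (tdim_eq0 Hd).
rewrite /=; congr Node; apply: (@eq_from_nth _ leaf); rewrite ?size_map // => i Hi.
by rewrite (nth_map leaf) // IH // -ltnS; apply: leq_trans (tdim_nth Hi) Hd.
Qed.

Lemma inc_small B k p : tdim B <= k -> p \in posl B ->
  sinc k B p = p /\ tinc k B p = p.
Proof.
elim/tree_nested_ind: B k p => l IH [|k] p Hd.
  by rewrite (tdim_eq0 Hd) => /mem_posl_Node [[[|j] [Hj ->]]|[j [p' []]]].
move=> /mem_posl_Node [[j [Hj ->]]|[j [[|a p'] [Hj Hp' ->]]]] //.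
have Hd' : tdim (nth leaf l j) <= k.
  by rewrite -ltnS; apply: leq_trans (tdim_nth Hj) Hd.
by have [E1 E2] := IH _ Hj _ _ Hd' Hp'; rewrite /= /child /= E1 E2.
Qed.

(** * Typing of raw terms *)

Section WtInd.
Local Unset Implicit Arguments.
Variable P : forall C : ctx, rterm (cV C) -> nat -> Prop.
Hypothesis Pvar : forall C (v : cV C) n, vdim v n -> P C (rvar v) n.
Hypothesis Pcoh : forall C B A (fs : seq (rterm (cV C))) n, tdim B <= n ->
    ((n = 0 /\ A = None) \/
     (exists m u v, n = m.+1 /\ A = Some (u, v) /\ full_sphere B m u v)) ->
    @gmap_gen wt C B fs ->
    (forall p, p \in posl B -> P C (fat B fs p) (size p).-1) -> P C (rcoh B A fs) n.

Fixpoint wt_nested_ind C t n (H : @wt C t n) {struct H} : P C t n :=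
  match H in @wt C t n return P C t n with
  | wt_var C v n Hv => Pvar C v n Hv
  | wt_coh C B A fs n Hd Hs Hg => Pcoh C B A fs n Hd Hs Hg (fun p Hp =>
      match Hg with conj _ Hall =>
        match Hall p Hp with conj Hw _ => wt_nested_ind C _ _ Hw end end)
  end.
End WtInd.

Lemma wt_rvar_inv C (x : cV C) n : wt (rvar x) n -> vdim x n.
Proof.
(* The context is an index of [wt], so [case] needs a goal abstracted over it. *)
pose inv C' (t : rterm (cV C')) n := if t is rvar y then vdim y n else True.
by move=> H; have : inv C (rvar x) n by case: H.
Qed.

Lemma wt_coh_inv C B A (fs : seq (rterm (cV C))) n : wt (rcoh B A fs) n ->
  [/\ tdim B <= n,
      (n = 0 /\ A = None) \/
      (exists m u v, n = m.+1 /\ A = Some (u, v) /\ full_sphere B m u v)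
    & @gmap_gen wt C B fs].
Proof.
pose inv C' (t : rterm (cV C')) n := if t is rcoh B A fs then
  [/\ tdim B <= n,
      (n = 0 /\ A = None) \/
      (exists m u v, n = m.+1 /\ A = Some (u, v) /\ full_sphere B m u v)
    & @gmap_gen wt C' B fs] else True.
by move=> H; have : inv C (rcoh B A fs) n by case: H.
Qed.

Definition glob_subst (C D : ctx) (g : cV C -> rterm (cV D)) : Prop :=
  forall x k, vdim x k -> wt (g x) k /\
    (0 < k -> rsrc (g x) = g (vsrc x) /\ rtgt (g x) = g (vtgt x)).

Definition dimctx (C : ctx) : Prop :=
  forall (x : cV C) k, vdim x k.+1 -> vdim (vsrc x) k /\ vdim (vtgt x) k.

Definition globctx (C : ctx) : Prop := forall (x : cV C) k, vdim x k.+2 ->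
  vsrc (vsrc x) = vsrc (vtgt x) /\ vtgt (vsrc x) = vtgt (vtgt x).

Lemma rsrc_bind C D (g : cV C -> rterm (cV D)) (t : rterm (cV C)) :
  (forall x, t = rvar x -> rsrc (g x) = g (vsrc x) /\ rtgt (g x) = g (vtgt x)) ->
  rsrc (bind g t) = bind g (rsrc t) /\ rtgt (bind g t) = bind g (rtgt t).
Proof.
case: t => [x|B [[a b]|] fs] H //=; first exact: H.
by rewrite !bind_bind; split; apply: eq_bind => y; rewrite fat_map_bind.
Qed.

Lemma rsrc_bind_wt C D (g : cV C -> rterm (cV D)) t k :
  glob_subst g -> wt t k.+1 ->
  rsrc (bind g t) = bind g (rsrc t) /\ rtgt (bind g t) = bind g (rtgt t).
Proof.
move=> Hg Ht; apply: rsrc_bind => x Ex; rewrite Ex in Ht.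
exact: (proj2 (Hg _ _ (wt_rvar_inv Ht))).
Qed.

Lemma wt_bind C D (g : cV C -> rterm (cV D)) t n :
  glob_subst g -> wt t n -> wt (bind g t) n.
Proof.
move=> + H; elim/wt_nested_ind: C t n / H D g => [C x n Hx|C B A fs n Hd Hs Hgm IH] D g Hg.
  by case: (Hg _ _ Hx).
apply: wt_coh => //; split; first by rewrite size_map; case: Hgm.
move=> p Hp; rewrite !fat_map_bind; split; first exact: IH.
move=> Hsz; have [Hw Hst] := proj2 Hgm p Hp; have [<- <-] := Hst Hsz.
apply: (rsrc_bind_wt (k := (size p).-2) Hg).
by case: (size p) Hsz Hw => [|[|k]].
Qed.

Lemma glob_subst_fat C B (fs : seq (rterm (cV C))) :
  gmap_gen wt B fs -> glob_subst (C := ctxPos B) (fat B fs).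
Proof.
case=> _ H x k [/= Hx Hs]; have [Hw Hst] := H x Hx.
by rewrite Hs /= in Hw Hst; split => // Hk; apply: Hst.
Qed.

Lemma wt_rsrc C t k : dimctx C -> @wt C t k.+1 -> wt (rsrc t) k /\ wt (rtgt t) k.
Proof.
move=> HC; case: t => [x|B A fs] H.
  by have [H1 H2] := HC _ _ (wt_rvar_inv H); split; apply: wt_var.
have [_ [[//]|[m [a [b [[<-] [-> [Ha [Hb _]]]]]]]] Hg] := wt_coh_inv H.
by split; apply: wt_bind (glob_subst_fat Hg) _.
Qed.

Lemma wt_glob C t k : globctx C -> @wt C t k.+2 ->
  rsrc (rsrc t) = rsrc (rtgt t) /\ rtgt (rsrc t) = rtgt (rtgt t).
Proof.
move=> HC; case: t => [x|B A fs] H /=.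
  by have [-> ->] := HC _ _ (wt_rvar_inv H).
have [_ [[//]|[m [a [b [[<-] [-> [Ha [Hb [Hpar _]]]]]]]]] Hg] := wt_coh_inv H.
have [Ea Eb] := Hpar isT; have Hga := glob_subst_fat Hg.
have [Sa Ta] := rsrc_bind_wt Hga Ha; have [Sb Tb] := rsrc_bind_wt Hga Hb.
by rewrite /= Sa Ta Sb Tb Ea Eb.
Qed.

Lemma wt_bind_eq C D (g h : cV C -> rterm (cV D)) t n :
  wt t n -> (forall x k, vdim x k -> g x = h x) -> bind g t = bind h t.
Proof.
move=> H; elim/wt_nested_ind: C t n / H D g h => [C x n Hx|C B A fs n _ _ Hgm IH] D g h E.
  exact: E Hx.
rewrite /= -(fat_posl (proj1 Hgm)) -!map_comp.
by congr rcoh; apply/eq_in_map => p Hp; apply: IH.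
Qed.

Notation PB B := (ctxPos B).
Notation sP B := (@rsrc (ctxPos B)).
Notation tP B := (@rtgt (ctxPos B)).

Lemma dimctx_Pos B : dimctx (PB B).
Proof.
move=> x k [/= Hx Hs]; have H1 : 1 < size x by rewrite Hs.
have [S1 S2] := size_psrc_ptgt H1; have [M1 M2] := mem_psrc_ptgt Hx H1.
by rewrite /= S1 S2 Hs.
Qed.

Lemma globctx_Pos B : globctx (PB B).
Proof. by move=> x k [/= _ Hs]; apply: psrc_ptgt_glob; rewrite Hs. Qed.

Lemma gmap_map C Q (h : seq nat -> rterm (cV C)) :
  (forall p, p \in posl Q -> wt (h p) (size p).-1 /\
     (1 < size p -> rsrc (h p) = h (psrc p) /\ rtgt (h p) = h (ptgt p))) ->
  gmap_gen wt Q (map h (posl Q)).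
Proof.
move=> H; split; first by rewrite size_map.
move=> p Hp; rewrite fat_map //; have [Hw Hst] := H p Hp; split => // H1.
by have [M1 M2] := mem_psrc_ptgt Hp H1; rewrite !fat_map //; apply: Hst.
Qed.

Definition pos_vars B : seq (rterm (seq nat)) := [seq rvar p | p <- posl B].

Lemma gmap_pos_vars B : gmap_gen wt (C := PB B) B (pos_vars B).
Proof.
apply: gmap_map => p Hp; split => //; apply: wt_var; split => //=.
by have /andP [H1 _] := size_posl Hp; rewrite prednK.
Qed.

Lemma bind_pos_vars B t n : wt (C := PB B) t n -> bind (fat B (pos_vars B)) t = t.
Proof.
move=> H; rewrite -[RHS]bind_rvar; apply: (wt_bind_eq (D := PB B) H) => x k [Hx _].
by rewrite fat_map.
Qed.

Lemma rmap_inc_small B k t n : tdim B <= k -> wt (C := PB B) t n ->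
  rmap (sinc k B) t = t /\ rmap (tinc k B) t = t.
Proof.
move=> Hd H; rewrite /rmap; split; rewrite -[RHS]bind_rvar;
  apply: (wt_bind_eq (D := PB B) H) => x j [Hx _];
  by have [E1 E2] := inc_small Hd Hx; rewrite ?E1 ?E2.
Qed.

Lemma covers_rsrc B k t : covers B k (sP B t) -> covers B k.+1 t.
Proof. by move=> H p Hp; rewrite /= !mem_cat H ?orbT. Qed.

Lemma full_sphere_small B m u v : tdim B <= m ->
  full_sphere B m u v <->
  [/\ wt (C := PB B) u m, wt (C := PB B) v m,
      0 < m -> sP B u = sP B v /\ tP B u = tP B v,
      covers B m u & covers B m v].
Proof.
move=> Hd; rewrite /full_sphere /full_sphere_gen bd_small //; split.
  move=> [Hu [Hv [Hpar [u' [v' [Hu' [Cu' [Hv' [Cv' [Eu Ev]]]]]]]]]].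
  have [Su _] := rmap_inc_small Hd Hu'; have [_ Tv] := rmap_inc_small Hd Hv'.
  by rewrite Eu Ev Su Tv in Hu Hv Hpar *.
move=> [Hu Hv Hpar Cu Cv]; do 3 split => //; exists u, v.
have [Su _] := rmap_inc_small Hd Hu; have [_ Tv] := rmap_inc_small Hd Hv.
by rewrite Su Tv.
Qed.

Lemma full_sphere_swap B m u v : tdim B <= m ->
  full_sphere B m u v -> full_sphere B m v u.
Proof.
move=> Hd /(full_sphere_small _ _ Hd) [Hu Hv Hpar Cu Cv].
apply/full_sphere_small => //; split => // Hm.
by have [-> ->] := Hpar Hm.
Qed.

(** * The trees of composition and identity *)

Notation top m := (nseq m.+1 0).

(* In C_m and D_m, [spine k 0] and [spine k 1] are the k-dimensional source
   and target of the top cell(s) for k < m, [spine m 0], [spine m 1] and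
   [spine m 2] are the three m-dimensional positions of C_m, and [cpos m 0],
   [cpos m 1] its two (m+1)-dimensional positions. *)
Definition spine (k e : nat) : seq nat := rcons (nseq k 0) e.

Definition cpos (m e : nat) : seq nat := nseq m 0 ++ [:: e; 0].

Lemma spine_top m : spine m 0 = top m.
Proof. by rewrite /spine; elim: m => //= m ->. Qed.

Lemma size_spine k e : size (spine k e) = k.+1.
Proof. by rewrite size_rcons size_nseq. Qed.

Lemma psrc_spine k e : psrc (spine k.+1 e) = spine k 0 /\ ptgt (spine k.+1 e) = spine k 1.
Proof.
elim: k => // k [IH1 IH2].
have Hs : 1 < size (spine k.+1 e) by rewrite size_spine.
have -> : spine k.+2 e = 0 :: spine k.+1 e by [].
by rewrite psrc_cons // ptgt_cons // IH1 IH2.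
Qed.

Lemma psrc_cpos m e : psrc (cpos m e) = spine m e /\ ptgt (cpos m e) = spine m e.+1.
Proof.
elim: m => // m [IH1 IH2].
have Hs : 1 < size (cpos m e) by rewrite size_cat addn2.
have -> : cpos m.+1 e = 0 :: cpos m e by [].
by rewrite psrc_cons // ptgt_cons // IH1 IH2.
Qed.

Lemma tdim_Node1 t : tdim (Node [:: t]) = (tdim t).+1.
Proof. by rewrite tdim_Node /= maxn0. Qed.

Lemma tdim_Ctree m : tdim (Ctree m) = m.+1.
Proof. by elim: m => // m IH; rewrite /Ctree iterS -/(Ctree m) tdim_Node1 IH. Qed.

Lemma tdim_Dtree m : tdim (Dtree m) = m.
Proof. by elim: m => // m IH; rewrite /Dtree iterS -/(Dtree m) tdim_Node1 IH. Qed.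

Lemma bd_Ctree m : bd m (Ctree m) = Dtree m.
Proof.
by elim: m => // m IH; rewrite /Ctree /Dtree !iterS -/(Ctree m) -/(Dtree m) /= IH.
Qed.

Lemma mem_posl_Node1 t p : p \in posl (Node [:: t]) ->
  p = [:: 0] \/ p = [:: 1] \/ exists2 p', p' \in posl t & p = 0 :: p'.
Proof.
move/mem_posl_Node => [[j [Hj ->]]|[j [p' [Hj Hp ->]]]].
  by case: j Hj => [|[|]]; auto.
by case: j Hj Hp => // _ Hp; right; right; exists p'.
Qed.

Lemma cons0_mem_posl_Node1 t p : p \in posl t -> 0 :: p \in posl (Node [:: t]).
Proof. exact: (@cons_mem_posl [:: t] 0). Qed.

Definition Cpos (m : nat) (p : seq nat) : Prop :=
  (exists k e, [/\ k <= m, e < 2 & p = spine k e]) \/ p = spine m 2 \/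
  exists2 e, e < 2 & p = cpos m e.

Definition Dpos (m : nat) (p : seq nat) : Prop :=
  (exists k e, [/\ k < m, e < 2 & p = spine k e]) \/ p = spine m 0.

Lemma posl_Ctree m p : p \in posl (Ctree m) -> Cpos m p.
Proof.
elim: m p => [|m IH] p.
  rewrite inE => /orP [/eqP ->|]; first by left; exists 0, 0.
  rewrite inE => /orP [/eqP ->|]; first by left; exists 0, 1.
  rewrite inE => /orP [/eqP ->|]; first by right; left.
  by rewrite !inE => /orP [] /eqP ->; right; right; [exists 0 | exists 1].
rewrite /Ctree iterS -/(Ctree m) => /mem_posl_Node1 [->|[->|[p' Hp ->]]].
- by left; exists 0, 0.
- by left; exists 0, 1.
case: (IH _ Hp) => [[k [e [Hk He ->]]]|[->|[e He ->]]].
- by left; exists k.+1, e.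
- by right; left.
- by right; right; exists e.
Qed.

Lemma posl_Dtree m p : p \in posl (Dtree m) -> Dpos m p.
Proof.
elim: m p => [|m IH] p; first by rewrite inE => /eqP ->; right.
rewrite /Dtree iterS -/(Dtree m) => /mem_posl_Node1 [->|[->|[p' Hp ->]]].
- by left; exists 0, 0.
- by left; exists 0, 1.
case: (IH _ Hp) => [[k [e [Hk He ->]]]|->].
- by left; exists k.+1, e.
- by right.
Qed.

Lemma Dpos_Cpos m p : Dpos m p -> Cpos m p.
Proof.
case=> [[k [e [Hk He ->]]]|->]; left; first by exists k, e; rewrite ltnW.
by exists m, 0.
Qed.

Lemma spine_mem_posl_Ctree m e : e < 3 -> spine m e \in posl (Ctree m).
Proof.
elim: m => [|m IH] He; first by case: e He => [|[|[|]]].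
by rewrite /Ctree iterS -/(Ctree m); apply: cons0_mem_posl_Node1; apply: IH.
Qed.

Lemma top_mem_posl_Dtree m : top m \in posl (Dtree m).
Proof.
elim: m => // m IH.
by rewrite /Dtree iterS -/(Dtree m); apply: cons0_mem_posl_Node1.
Qed.

Lemma inc_Ctree m : sinc m (Ctree m) (top m) = top m /\
                    tinc m (Ctree m) (top m) = spine m 2.
Proof.
elim: m => // m [IH1 IH2].
by rewrite /Ctree iterS -/(Ctree m) /= -/(top m) /child /= IH1 IH2.
Qed.

Lemma inc_Dtree m : sinc m (Dtree m) (top m) = top m /\
                    tinc m (Dtree m) (top m) = top m.
Proof.
elim: m => // m [IH1 IH2].
by rewrite /Dtree iterS -/(Dtree m) /= -/(top m) /child /= IH1 IH2.
Qed.

Lemma supp_rvar B k (p : seq nat) : @supp (PB B) k.+1 (rvar p) =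
  p :: @supp (PB B) k (rvar (psrc p)) ++ @supp (PB B) k (rvar (ptgt p)).
Proof. by []. Qed.

Lemma rsrc_rvar_Pos B p : @rsrc (PB B) (rvar p) = rvar (psrc p).
Proof. by []. Qed.

Lemma rtgt_rvar_Pos B p : @rtgt (PB B) (rvar p) = rvar (ptgt p).
Proof. by []. Qed.

Lemma mem_supp_rvar B k (p : seq nat) : p \in @supp (PB B) k (rvar p).
Proof. by case: k => [|k]; rewrite /= inE eqxx. Qed.

Lemma spine_mem_supp_top B k j e : j < k -> e < 2 ->
  spine j e \in @supp (PB B) k (rvar (spine k 0)).
Proof.
elim: k => // k IH Hj He; rewrite supp_rvar; have [-> ->] := psrc_spine k 0.
rewrite in_cons mem_cat; apply/orP; right.
case: (ltnP j k) => [Hjk|Hkj]; first by rewrite IH.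
have -> : j = k by apply/eqP; rewrite eqn_leq Hkj -ltnS Hj.
by case: e He {IH} => [|[|//]] _; rewrite mem_supp_rvar ?orbT.
Qed.

Lemma covers_Dtree m : covers (Dtree m) m (rvar (top m)).
Proof.
rewrite -spine_top => p /posl_Dtree [[k [e [Hk He ->]]]|->].
  exact: spine_mem_supp_top.
exact: mem_supp_rvar.
Qed.

Definition top_sphere (Q : tree) (m : nat) : option (rterm (seq nat) * rterm (seq nat)) :=
  Some (rvar (sinc m Q (top m)), rvar (tinc m Q (top m))).

Lemma full_sphere_Ctree m : full_sphere (Ctree m) m
  (rvar (sinc m (Ctree m) (top m))) (rvar (tinc m (Ctree m) (top m))).
Proof.
have [-> ->] := inc_Ctree m; rewrite -spine_top.
have Hw e : e < 3 -> wt (C := PB (Ctree m)) (rvar (spine m e)) m.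
  by move=> He; apply: wt_var; split; rewrite ?spine_mem_posl_Ctree ?size_spine.
split; first exact: Hw; split; first exact: Hw; split.
  case: m {Hw} => // m _; have [S0 T0] := psrc_spine m 0; have [S2 T2] := psrc_spine m 2.
  by rewrite !rsrc_rvar_Pos !rtgt_rvar_Pos S0 S2 T0 T2.
have Hd : wt (C := PB (Dtree m)) (rvar (top m)) m.
  by apply: wt_var; split; rewrite ?top_mem_posl_Dtree ?size_nseq.
exists (rvar (top m)), (rvar (top m)); rewrite bd_Ctree.
have [E1 E2] := inc_Ctree m; rewrite /rmap /= E1 E2 spine_top.
by do !split => //; apply: covers_Dtree.
Qed.

Lemma full_sphere_Dtree m : full_sphere (Dtree m) m
  (rvar (sinc m (Dtree m) (top m))) (rvar (tinc m (Dtree m) (top m))).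
Proof.
have [-> ->] := inc_Dtree m.
have Hw : wt (C := PB (Dtree m)) (rvar (top m)) m.
  by apply: wt_var; split; rewrite ?top_mem_posl_Dtree ?size_nseq.
by apply/full_sphere_small; rewrite ?tdim_Dtree //; split => //; apply: covers_Dtree.
Qed.

(** * Iterated boundaries *)

(* The k-dimensional source (e = 0) or target (e <> 0) of an n-cell, written
   so that the arguments of [comp] unfold to it by conversion. *)
Definition bdry_at (T : Type) (src tgt : T -> T) (n k e : nat) (x : T) : T :=
  if e == 0 then iter (n - k) src x else tgt (iter (n - k.+1) src x).

Lemma bdry_at_S T (src tgt : T -> T) n k e x : k < n ->
  bdry_at src tgt n.+1 k e x = bdry_at src tgt n k e (src x).
Proof. by move=> Hk; rewrite /bdry_at !subSn ?iterSr // ltnW. Qed.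

Lemma wt_iter_rsrc C t i j : dimctx C -> @wt C t j -> i <= j ->
  wt (iter i (@rsrc C) t) (j - i).
Proof.
move=> HC Ht; elim: i => [|i IH] Hij; first by rewrite subn0.
by have := IH (ltnW Hij); rewrite iterS -(subnSK Hij) => /(wt_rsrc HC) [].
Qed.

Section Boundaries.
Variables (C : ctx) (HC : dimctx C) (HG : globctx C).

Lemma wt_bdry_at t n k e : @wt C t n -> k < n -> wt (bdry_at (@rsrc C) (@rtgt C) n k e t) k.
Proof.
move=> Ht Hk; rewrite /bdry_at; case: eqP => _.
  by have := wt_iter_rsrc HC Ht (leq_subr k n); rewrite subKn // ltnW.
have := wt_iter_rsrc HC Ht (leq_subr k.+1 n); rewrite subKn //.
by case/(wt_rsrc HC).
Qed.

Lemma rsrc_bdry_at t n k e : @wt C t n -> k.+1 < n ->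
  rsrc (bdry_at (@rsrc C) (@rtgt C) n k.+1 e t) = bdry_at (@rsrc C) (@rtgt C) n k 0 t /\
  rtgt (bdry_at (@rsrc C) (@rtgt C) n k.+1 e t) = bdry_at (@rsrc C) (@rtgt C) n k 1 t.
Proof.
move=> Ht Hk; rewrite /bdry_at /=; case: eqP => _; first by rewrite -iterS subnSK // ltnW.
have Hy := wt_iter_rsrc HC Ht (leq_subr k.+2 n); rewrite subKn // in Hy.
have [<- <-] := wt_glob HG Hy.
by rewrite -!iterS subnSK // subnSK // ltnW.
Qed.

End Boundaries.

Lemma iter_rsrc_bind C D (g : cV C -> rterm (cV D)) t i j :
  dimctx C -> glob_subst g -> wt t j -> i <= j ->
  iter i (@rsrc D) (bind g t) = bind g (iter i (@rsrc C) t).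
Proof.
move=> HC Hg Ht; elim: i => [|i IH] Hij //.
have Hw := wt_iter_rsrc HC Ht (ltnW Hij); rewrite -subnSK // in Hw.
by rewrite !iterS IH ?(ltnW Hij) // (proj1 (rsrc_bind_wt Hg Hw)).
Qed.

Lemma bind_bdry_at C D (g : cV C -> rterm (cV D)) t n k e :
  dimctx C -> glob_subst g -> wt t n -> k < n ->
  bind g (bdry_at (@rsrc C) (@rtgt C) n k e t) = bdry_at (@rsrc D) (@rtgt D) n k e (bind g t).
Proof.
move=> HC Hg Ht Hk; rewrite /bdry_at; case: eqP => _.
  by rewrite (iter_rsrc_bind HC Hg Ht (leq_subr _ _)).
have Hw := wt_iter_rsrc HC Ht (leq_subr k.+1 n); rewrite subKn // in Hw.
by rewrite (iter_rsrc_bind HC Hg Ht (leq_subr _ _)) (proj2 (rsrc_bind_wt Hg Hw)).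
Qed.

Section Algebra.
Variables (X : gset) (alg : talg X).

Definition alpha_at (t : rterm {k & gcell X k}) (j : nat) : {k & gcell X k} :=
  existT _ j (alpha alg j t).

Lemma dimctx_G : dimctx (ctxG X).
Proof. by move=> [j c] k /= Hj; subst j. Qed.

Lemma gvsrc_alpha_at t k : wt (C := ctxG X) t k.+1 ->
  gvsrc (alpha_at t k.+1) = alpha_at (rsrc t) k /\
  gvtgt (alpha_at t k.+1) = alpha_at (rtgt t) k.
Proof. by move=> H; rewrite /alpha_at /= (alpha_src alg H) (alpha_tgt alg H). Qed.

Lemma iter_gvsrc_alpha_at t i j : wt (C := ctxG X) t j -> i <= j ->
  iter i (@gvsrc X) (alpha_at t j) = alpha_at (iter i (@rsrc (ctxG X)) t) (j - i).
Proof.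
move=> Ht; elim: i => [|i IH] Hij; first by rewrite subn0.
have Hw := wt_iter_rsrc dimctx_G Ht (ltnW Hij); rewrite -subnSK // in Hw.
by rewrite !iterS IH ?(ltnW Hij) // -subnSK // (proj1 (gvsrc_alpha_at Hw)).
Qed.

Lemma alpha_at_bdry_at t n k e : wt (C := ctxG X) t n -> k < n ->
  alpha_at (bdry_at (@rsrc (ctxG X)) (@rtgt (ctxG X)) n k e t) k =
  bdry_at (@gvsrc X) (@gvtgt X) n k e (alpha_at t n).
Proof.
move=> Ht Hk; rewrite /bdry_at; case: eqP => _.
  by rewrite iter_gvsrc_alpha_at ?leq_subr // subKn // ltnW.
have Hw := wt_iter_rsrc dimctx_G Ht (leq_subr k.+1 n); rewrite subKn // in Hw.
by rewrite iter_gvsrc_alpha_at ?leq_subr // subKn // (proj2 (gvsrc_alpha_at Hw)).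
Qed.

(* The multiplication law [alpha_mult], applied to the term of T T X whose
   variables are the cells [H p]. *)
Lemma cohX_alpha Q A n (H : seq nat -> rterm {k & gcell X k}) F :
  wt (C := ctxG X) (rcoh Q A (map H (posl Q))) n ->
  {in posl Q, forall p, F p = alpha_at (H p) (size p).-1} ->
  cohX alg Q A F n = alpha alg n (rcoh Q A (map H (posl Q))).
Proof.
move=> Ht HF; have [Hd Hs Hgm] := wt_coh_inv Ht.
pose w p := existT (fun _ => rterm {k & gcell X k}) (size p).-1 (H p).
pose tT : rterm (cV (ctxT (ctxG X))) := rcoh Q A [seq rvar (w p) | p <- posl Q].
have HtT : wt tT n.
  apply: wt_coh => //; apply: gmap_map => p Hp.
  have [Hw Hst] := proj2 Hgm p Hp; rewrite fat_map // in Hw.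
  split; first by apply: wt_var.
  move=> H1; have [M1 M2] := mem_psrc_ptgt Hp H1; have [S1 S2] := size_psrc_ptgt H1.
  have [E1 E2] := Hst H1; rewrite !fat_map // in E1 E2.
  by rewrite /w /= S1 S2 E1 E2.
have := alpha_mult alg HtT.
have -> : bind (fun v => projT2 v) tT = rcoh Q A (map H (posl Q)).
  by rewrite /tT /= -map_comp.
move=> <-; rewrite /cohX /rmap /tT /= -!map_comp; congr (alpha alg n (rcoh Q A _)).
by apply/eq_in_map => p Hp /=; rewrite HF.
Qed.

End Algebra.

(** * The composite and the identity in T Pos(B) *)

Definition coh_id (B : tree) (u v : rterm (seq nat)) : rterm (seq nat) :=
  rcoh B (Some (u, v)) (pos_vars B).

Lemma wt_coh_id B m u v : tdim B <= m.+1 -> full_sphere B m u v ->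
  wt (C := PB B) (coh_id B u v) m.+1.
Proof.
by move=> Hd Hf; apply: wt_coh => //; [right; exists m, u, v | apply: gmap_pos_vars].
Qed.

Lemma rsrc_coh_id B m u v : tdim B <= m -> full_sphere B m u v ->
  sP B (coh_id B u v) = u /\ tP B (coh_id B u v) = v.
Proof.
move=> Hd /(full_sphere_small _ _ Hd) [Hu Hv _ _ _].
by rewrite /= (bind_pos_vars Hu) (bind_pos_vars Hv).
Qed.

(* The arguments of the composition coherence: the globular map
   Pos(C_m) -> T Pos(B) sending the two top cells to [coh_id B u v] and
   [coh_id B v u]; on Pos(D_m) it classifies u, so [ident_term] is id(u). *)
Definition comp_args (B : tree) (m : nat) (u v : rterm (seq nat)) (p : seq nat) :
    rterm (seq nat) :=
  let k := (size p).-1 in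
  if k == m.+1 then (if nth 0 p m == 0 then coh_id B u v else coh_id B v u)
  else if (k == m) && (last 0 p == 2) then tP B (coh_id B v u)
  else bdry_at (sP B) (tP B) m.+1 k (last 0 p) (coh_id B u v).

Definition comp_term (B : tree) (m : nat) (u v : rterm (seq nat)) : rterm (seq nat) :=
  rcoh (Ctree m) (top_sphere (Ctree m) m) (map (comp_args B m u v) (posl (Ctree m))).

Definition ident_term (B : tree) (m : nat) (u v : rterm (seq nat)) : rterm (seq nat) :=
  rcoh (Dtree m) (top_sphere (Dtree m) m) (map (comp_args B m u v) (posl (Dtree m))).

Section CompositeTerm.
Variables (B : tree) (m : nat) (u v : rterm (seq nat)).
Hypotheses (Hf : full_sphere B m u v) (Hd : tdim B <= m).
Local Notation x := (coh_id B u v).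
Local Notation xb := (coh_id B v u).
Local Notation h := (comp_args B m u v).

Lemma comp_args_spine k e : k <= m -> e < 2 ->
  h (spine k e) = bdry_at (sP B) (tP B) m.+1 k e x.
Proof.
move=> Hk He; rewrite /comp_args /spine size_rcons size_nseq succnK last_rcons; cbv zeta.
by rewrite ltn_eqF //; case: e He => [|[|]] // _; rewrite andbF.
Qed.

Lemma comp_args_src : h (spine m 0) = sP B x.
Proof. by rewrite comp_args_spine // /bdry_at subSnn. Qed.

Lemma comp_args_tgt : h (spine m 1) = tP B x.
Proof. by rewrite comp_args_spine // /bdry_at subnn. Qed.

Lemma comp_args_spine2 : h (spine m 2) = tP B xb.
Proof.
rewrite /comp_args /spine size_rcons size_nseq succnK last_rcons; cbv zeta.
by rewrite ltn_eqF // eqxx.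
Qed.

Lemma comp_args_cpos0 : h (cpos m 0) = x.
Proof.
rewrite /comp_args /cpos size_cat size_nseq addn2 succnK; cbv zeta.
by rewrite eqxx nth_cat size_nseq ltnn subnn.
Qed.

Lemma comp_args_cpos1 : h (cpos m 1) = xb.
Proof.
rewrite /comp_args /cpos size_cat size_nseq addn2 succnK; cbv zeta.
by rewrite eqxx nth_cat size_nseq ltnn subnn.
Qed.

Let wt_x : wt (C := PB B) x m.+1.
Proof. exact: wt_coh_id (leqW Hd) Hf. Qed.

Let wt_xb : wt (C := PB B) xb m.+1.
Proof. exact: wt_coh_id (leqW Hd) (full_sphere_swap Hd Hf). Qed.

Let rsrc_x : sP B x = u /\ tP B x = v.
Proof. exact: rsrc_coh_id Hd Hf. Qed.

Let rsrc_xb : sP B xb = v /\ tP B xb = u.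
Proof. exact: rsrc_coh_id Hd (full_sphere_swap Hd Hf). Qed.

Lemma gmap_comp_args_spine k e : k <= m -> e < 2 ->
  wt (C := PB B) (h (spine k e)) k /\
  (0 < k -> sP B (h (spine k e)) = h (psrc (spine k e)) /\
            tP B (h (spine k e)) = h (ptgt (spine k e))).
Proof.
move=> Hk He; rewrite comp_args_spine //.
split; first exact: (wt_bdry_at (@dimctx_Pos B) e wt_x).
case: k Hk => // k Hk _; have [-> ->] := psrc_spine k e.
rewrite !comp_args_spine ?(ltnW Hk) //.
exact: (rsrc_bdry_at (@dimctx_Pos B) (@globctx_Pos B) e wt_x).
Qed.

Lemma gmap_comp_args p : Cpos m p -> wt (C := PB B) (h p) (size p).-1 /\
  (1 < size p -> sP B (h p) = h (psrc p) /\ tP B (h p) = h (ptgt p)).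
Proof.
case=> [[k [e [Hk He ->]]]|[->|[e He ->]]].
- by rewrite size_spine; apply: gmap_comp_args_spine.
- have E : h (spine m 2) = h (spine m 0).
    by rewrite comp_args_spine2 comp_args_src (proj2 rsrc_xb) (proj1 rsrc_x).
  rewrite size_spine E.
  have [W S] := gmap_comp_args_spine (leqnn m) (isT : 0 < 2); split => // H1.
  have Hm : 0 < m := H1.
  have [S0 T0] := psrc_spine m.-1 0; have [S2 T2] := psrc_spine m.-1 2.
  by rewrite prednK // in S0 T0 S2 T2; rewrite S2 T2 -S0 -T0; apply: S.
- rewrite size_cat size_nseq addn2; have [-> ->] := psrc_cpos m e.
  case: e He => [|[|//]] _; rewrite ?comp_args_cpos0 ?comp_args_cpos1; split => // _.
    by rewrite comp_args_src comp_args_tgt.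
  by rewrite comp_args_tgt comp_args_spine2 (proj1 rsrc_xb) (proj2 rsrc_x).
Qed.

Lemma wt_comp_term : wt (C := PB B) (comp_term B m u v) m.+1.
Proof.
apply: wt_coh; first by rewrite tdim_Ctree.
  right; exists m, (rvar (sinc m (Ctree m) (top m))), (rvar (tinc m (Ctree m) (top m))).
  by split; last split; last exact: full_sphere_Ctree.
by apply: gmap_map => p Hp; apply: gmap_comp_args; apply: posl_Ctree.
Qed.

Lemma wt_ident_term : wt (C := PB B) (ident_term B m u v) m.+1.
Proof.
apply: wt_coh; first by rewrite tdim_Dtree.
  right; exists m, (rvar (sinc m (Dtree m) (top m))), (rvar (tinc m (Dtree m) (top m))).
  by split; last split; last exact: full_sphere_Dtree.
by apply: gmap_map => p Hp; apply: gmap_comp_args; apply/Dpos_Cpos/posl_Dtree.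
Qed.

Lemma rsrc_comp_term : sP B (comp_term B m u v) = u /\ tP B (comp_term B m u v) = u.
Proof.
have [S T] := inc_Ctree m; rewrite /= S T -spine_top !fat_map ?spine_mem_posl_Ctree //.
by rewrite comp_args_src comp_args_spine2 (proj1 rsrc_x) (proj2 rsrc_xb).
Qed.

Lemma rsrc_ident_term : sP B (ident_term B m u v) = u /\ tP B (ident_term B m u v) = u.
Proof.
have [S T] := inc_Dtree m; rewrite /= S T !fat_map ?top_mem_posl_Dtree //.
by rewrite -spine_top comp_args_src (proj1 rsrc_x).
Qed.

Lemma full_sphere_comp_ident : full_sphere B m.+1 (comp_term B m u v) (ident_term B m u v).
Proof.
have [_ _ _ Cu _] := (full_sphere_small _ _ Hd).1 Hf.
have [Sc Tc] := rsrc_comp_term; have [Si Ti] := rsrc_ident_term.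
apply/full_sphere_small; first exact: leqW.
split; [exact: wt_comp_term | exact: wt_ident_term | by rewrite Sc Tc Si Ti | |];
  apply: covers_rsrc; by rewrite ?Sc ?Si.
Qed.

End CompositeTerm.

(** * Interpretation in a weak omega-category *)

Lemma glob_subst_gmapX X B (f : seq nat -> {k & gcell X k}) :
  gmapX B f -> glob_subst (C := PB B) (D := ctxG X) (fun p => rvar (f p)).
Proof.
move=> Hf x k [/= Hx Hs]; have [H1 H2] := Hf x Hx.
split; first by apply: wt_var; rewrite /= H1 Hs.
by move=> Hk; have [/= -> ->] : gvsrc (f x) = f (psrc x) /\ gvtgt (f x) = f (ptgt x)
  by apply: H2; rewrite Hs.
Qed.

Section Interpretation.
Variables (X : gset) (alg : talg X) (B : tree) (m : nat) (u v : rterm (seq nat)).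
Variable f : seq nat -> {k & gcell X k}.
Hypotheses (Hf : full_sphere B m u v) (Hd : tdim B <= m) (Hg : gmapX B f).
Local Notation g := (fun p => rvar (f p) : rterm (cV (ctxG X))).
Local Notation x := (coh_id B u v).
Local Notation xb := (coh_id B v u).
Local Notation cx := (cohX alg B (Some (u, v)) f m.+1).
Local Notation cxb := (cohX alg B (Some (v, u)) f m.+1).

Let Hgs := glob_subst_gmapX Hg.
Let wt_x : wt (C := PB B) x m.+1 := wt_coh_id (leqW Hd) Hf.
Let wt_xb : wt (C := PB B) xb m.+1 := wt_coh_id (leqW Hd) (full_sphere_swap Hd Hf).

Lemma alpha_at_bind_bdry_at t n k e : wt (C := PB B) t n -> k < n ->
  alpha_at alg (bind g (bdry_at (sP B) (tP B) n k e t)) k =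
  bdry_at (@gvsrc X) (@gvtgt X) n k e (alpha_at alg (bind g t) n).
Proof.
move=> Ht Hk; rewrite (bind_bdry_at e (@dimctx_Pos B) Hgs Ht Hk).
exact: (alpha_at_bdry_at alg e (wt_bind Hgs Ht) Hk).
Qed.

Lemma cohX_swap_src_tgt : gsrc cxb = gtgt cx /\ gtgt cxb = gsrc cx.
Proof.
have [Sx Tx] := rsrc_coh_id Hd Hf; have [Sxb Txb] := rsrc_coh_id Hd (full_sphere_swap Hd Hf).
have [Rx R'x] := rsrc_bind_wt Hgs wt_x; have [Rxb R'xb] := rsrc_bind_wt Hgs wt_xb.
rewrite (alpha_src alg (wt_bind Hgs wt_xb)) (alpha_tgt alg (wt_bind Hgs wt_x)).
rewrite (alpha_tgt alg (wt_bind Hgs wt_xb)) (alpha_src alg (wt_bind Hgs wt_x)).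
by rewrite Rx R'x Rxb R'xb Sx Tx Sxb Txb.
Qed.

Lemma alpha_comp_term : alpha alg m.+1 (bind g (comp_term B m u v)) = Defs.comp alg cx cxb.
Proof.
symmetry.
have Hw := wt_bind Hgs (wt_comp_term Hf Hd).
rewrite /comp_term /= -map_comp in Hw *; apply: cohX_alpha => // p Hp /=.
have Hk : (size p).-1 <= m.+1.
  by have /andP [_] := size_posl Hp; rewrite tdim_Ctree; case: (size p).
rewrite /comp_args; set k := (size p).-1 in Hk *.
case: eqP => [->|Ek]; first by case: ifP.
case: ifP => [/andP [/eqP -> _]|_].
  rewrite -(proj2 (rsrc_bind_wt Hgs wt_xb)).
  exact: (proj2 (gvsrc_alpha_at alg (wt_bind Hgs wt_xb))).
by rewrite alpha_at_bind_bdry_at // ltn_neqAle Hk andbT; apply/eqP.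
Qed.

Lemma alpha_ident_term : alpha alg m.+1 (bind g (ident_term B m u v)) = ident alg (gsrc cx).
Proof.
symmetry.
have Hw := wt_bind Hgs (wt_ident_term Hf Hd).
rewrite /ident_term /= -map_comp in Hw *; apply: cohX_alpha => // p /posl_Dtree /=.
case=> [[k [e [Hk He ->]]]|->].
  rewrite size_spine succnK ltn_eqF // /spine last_rcons -/(spine k e) -subnS.
  rewrite comp_args_spine ?(ltnW Hk) // alpha_at_bind_bdry_at //; last exact: ltnW Hk.
  by rewrite bdry_at_S.
rewrite size_spine succnK eqxx comp_args_src -(proj1 (rsrc_bind_wt Hgs wt_x)).
exact: (proj1 (gvsrc_alpha_at alg (wt_bind Hgs wt_x))).
Qed.

Lemma cohX_comp_ident_src_tgt :
  gsrc (cohX alg B (Some (comp_term B m u v, ident_term B m u v)) f m.+2) =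
    Defs.comp alg cx cxb /\
  gtgt (cohX alg B (Some (comp_term B m u v, ident_term B m u v)) f m.+2) =
    ident alg (gsrc cx).
Proof.
have HF := full_sphere_comp_ident Hf Hd.
have Hw := wt_coh_id (leqW (leqW Hd)) HF; have [S T] := rsrc_coh_id (leqW Hd) HF.
have [R1 R2] := rsrc_bind_wt Hgs Hw.
rewrite (alpha_src alg (wt_bind Hgs Hw)) (alpha_tgt alg (wt_bind Hgs Hw)) R1 R2 S T.
by rewrite alpha_comp_term alpha_ident_term.
Qed.

End Interpretation.

Theorem proposition3p4 (B : tree) (m : nat) (u v : rterm (seq nat)) :
  full_sphere B m u v ->
  tdim B < m.+1 ->
  forall (X : gset) (alg : talg X) (f : seq nat -> {k & gcell X k}),
    @gmapX X B f ->
    invertible alg (cohX alg B (Some (u, v)) f m.+1).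
Proof.
move=> Hf Hd X alg f Hg; move: B m u v Hf Hd Hg.
cofix CIH => B m u v Hf Hd Hg.
case: (cohX_swap_src_tgt alg Hf Hd Hg) => Exb1 Exb2.
case: (cohX_comp_ident_src_tgt alg Hf Hd Hg) => Eeta1 Eeta2.
case: (cohX_comp_ident_src_tgt alg (full_sphere_swap Hd Hf) Hd Hg) => Eeps1 Eeps2.
exact: (inv_intro Exb1 Exb2 Eeta1 Eeta2 Eeps1 (etrans Eeps2 (congr1 (@ident X alg m) Exb1))
          (CIH _ _ _ _ (full_sphere_comp_ident Hf Hd) (leqW Hd) Hg)
          (CIH _ _ _ _ (full_sphere_comp_ident (full_sphere_swap Hd Hf) Hd) (leqW Hd) Hg)).
Qed.
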